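(* Let $\mathcal{U}\subseteq\mathbb{R}^K$ be convex and closed. Then the no-arbitrage subset $\mathcal{U}^{na}$ of $\mathcal{U}$ exists and equals $\mathcal{V}(\mathcal{U})\cap\mathcal{U}$, where \[\mathcal{V}(\mathcal{U})=\Big\{r\in\mathbb{R}^K:\ 0\in\mathcal{U},\ \Big(\textstyle\sum_{j=1}^ke_jr_j\in\mathcal{U}\Big)\vee\big(r_{1:k}\notin\mathcal{U}_{1:k}\big),\ \forall k=1,\dots,K-1\Big\},\] with $e_j\in\mathbb{R}^K$ the $j$-th column of the identity matrix, and $\mathcal{V}(\mathcal{U})=\emptyset$ if $0\notin\mathcal{U}$.
   Context: For $\mathcal{U}\subseteq\mathbb{R}^K$, history $\hat r_{1:k-1}\in\mathbb{R}^{k-1}$ and $1\le k\le k'\le K$, the projection is $\mathcal{U}_{k:k'}(\hat r_{1:k-1})=\{r\in\mathbb{R}^{k'-k+1}:\exists\bar r\in\mathbb{R}^{K-k'},\ [\hat r_{1:k-1};r;\bar r]\in\mathcal{U}\}$ (for $k'=K$: $[\hat r_{1:k-1};r]\in\mathcal{U}$); $\mathcal{U}_{1:k}$ denotes the projection onto the first $k$ coordinates. The worst-case risk measure with uncertainty set $\mathcal{U}$ is $\rho=\rho_0\circ\cdots\circ\rho_{K-1}$, with $\rho_k(X,r)=\sup_{r'\in\mathcal{U}:r'_{1:k}=r_{1:k}}X(r')$ if some $r'\in\mathcal{U}$ has $r'_{1:k}=r_{1:k}$, otherwise $\rho_k(X,r)=X([r_{1:k};0_{k+1:K}])$; $\rho_{k,K}=\rho_k\circ\cdots\circ\rho_{K-1}$.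 Investments $\zeta_\ell$ are functions of $r_{1:\ell}$. The set of returns with bounded conditional market risk is $\mathcal{A}(\mathcal{U})=\{r\in\mathbb{R}^K:\forall k\in\{0,\dots,K-1\},\ \inf_{\zeta_k,\dots,\zeta_{K-1}}\rho_{k,K}(-\sum_{\ell=k}^{K-1}\zeta_\ell r_{\ell+1},r)\in(-\infty,0]\}$ (here $\rho_{k,K}$ uses $\mathcal{U}$). The no-arbitrage subset $\mathcal{U}^{na}$ of $\mathcal{U}$ is the largest $\mathcal{U}'\subseteq\mathcal{U}$ with $\mathcal{U}'\subseteq\mathcal{A}(\mathcal{U}')$, i.e. $\mathcal{U}^{na}\subseteq\mathcal{A}(\mathcal{U}^{na})$ and every $\mathcal{U}'\subseteq\mathcal{U}$ with $\mathcal{U}'\subseteq\mathcal{A}(\mathcal{U}')$ satisfies $\mathcal{U}'\subseteq\mathcal{U}^{na}$. *)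

(* R^K is represented as 'rV[R]_K; the
   paper's coordinate j (1-based) is the ordinal j-1 (0-based). *)
From mathcomp Require Import all_boot all_order all_algebra.
From mathcomp Require Import all_classical all_reals all_analysis.
Set Implicit Arguments. Unset Strict Implicit. Unset Printing Implicit Defensive.
Import Order.TTheory GRing.Theory Num.Theory.
Local Open Scope classical_set_scope.
Local Open Scope ring_scope.

Section Defs.
Variables (R : realType) (K : nat).
Implicit Types (U : set 'rV[R]_K) (r : 'rV[R]_K).

Definition convexU U := forall x y (t : R), U x -> U y -> 0 <= t -> t <= 1 ->
  U (t *: x + (1 - t) *: y).

Definition agree (k : nat) (r' r : 'rV[R]_K) :=
  forall i : 'I_K, (i < k)%N -> r' 0 i = r 0 i.

(* r_{1:k} \in U_{1:k}  (projection of U onto the first k coordinates) *)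
Definition in_proj U (k : nat) r := exists u, U u /\ agree k u r.

Definition trunc (k : nat) r : 'rV[R]_K :=
  \row_(i < K) (if (i < k)%N then r 0 i else 0).

Definition rho U (k : nat) (X : 'rV[R]_K -> \bar R) (r : 'rV[R]_K) : \bar R :=
  if pselect (in_proj U k r)
  then ereal_sup [set X r' | r' in [set r' | U r' /\ agree k r' r]]
  else X (trunc k r).

Definition rho_from U (k : nat) (X : 'rV[R]_K -> \bar R) : 'rV[R]_K -> \bar R :=
  foldr (fun l Y => rho U l Y) X (iota k (K - k)).

Definition adapted (k : nat) (zeta : nat -> 'rV[R]_K -> R) :=
  forall l : nat, (k <= l)%N -> (l < K)%N ->
    forall r r', agree l r r' -> zeta l r = zeta l r'.

(* - \sum_{l=k}^{K-1} zeta_l r_{l+1}  (r_{l+1} is the 0-based coordinate l) *)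
Definition loss (k : nat) (zeta : nat -> 'rV[R]_K -> R) (r' : 'rV[R]_K) : \bar R :=
  (- \sum_(l < K | (k <= l)%N) zeta l r' * r' 0 l)%:E.

Definition A_set U : set 'rV[R]_K :=
  [set r | forall k : nat, (k < K)%N ->
     let v := ereal_inf [set rho_from U k (loss k zeta) r
                        | zeta in [set z | adapted k z]] in
     (-oo < v)%E /\ (v <= 0)%E].

Definition is_na_subset U (W : set 'rV[R]_K) :=
  [/\ W `<=` U, W `<=` A_set W &
      forall W', W' `<=` U -> W' `<=` A_set W' -> W' `<=` W].

Definition V_set U : set 'rV[R]_K :=
  [set r : 'rV[R]_K | U 0 /\ forall k : nat, (1 <= k)%N -> (k <= K - 1)%N ->
     U (\sum_(j < K | (j < k)%N) r 0 j *: (delta_mx 0 j : 'rV[R]_K)) \/ ~ in_proj U k r].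

End Defs.

From mathcomp Require Import all_boot all_order all_algebra.
From mathcomp Require Import all_classical all_reals all_analysis.
From mathcomp Require Import zify ring lra.
Import numFieldNormedType.Exports.
Import Order.TTheory GRing.Theory Num.Theory.
Local Open Scope classical_set_scope.
Local Open Scope ring_scope.

(* A set W closed under the truncations r |-> [r_{1:k}; 0] is arbitrage free:
   after any history the market may answer with the continuation whose future
   returns are all 0, on which no strategy gains anything.  V(U) `&` U is
   closed under truncation, since membership in V(U) says that the truncations
   of a point of U lie in U.
   Conversely, let W `<=` U be arbitrage free, p in W and l < K.  The
   worst-case gain of a bet of size c on r_{l+1} after the history p_{1:l} is
   bounded uniformly in c, so W contains continuations of p_{1:l} with r_{l+1}
   arbitrarily close to 0 from above and from below.  By downward induction on
   l the points [p_{1:l}; r_{l+1}; 0] lie in U, and convexity and closedness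
   of U then put [p_{1:l}; 0] in U; hence W `<=` V(U). *)

Lemma nat_down_ind (K : nat) (P : nat -> Prop) :
  P K -> (forall l, (l < K)%N -> P l.+1 -> P l) -> forall l, (l <= K)%N -> P l.
Proof.
move=> PK PS l lK; rewrite -(subKn lK).
elim: (K - l)%N => [|n IHn]; first by rewrite subn0.
have [nK|Kn] := ltnP n K; last by have -> : (K - n.+1 = K - n)%N by lia.
by apply: PS; [lia | rewrite subnSK].
Qed.

Section Truncation.
Context {R : realType} {K : nat}.
Implicit Types (r s p : 'rV[R]_K).

Lemma agree_refl l r : agree l r r.
Proof. by []. Qed.

Lemma agree_trunc l r : agree l (trunc l r) r.
Proof. by move=> i hi; rewrite mxE hi. Qed.

Lemma truncK r : trunc K r = r.
Proof. by apply/rowP => i; rewrite mxE ltn_ord. Qed.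

Lemma trunc0 r : trunc 0 r = 0.
Proof. by apply/rowP => i; rewrite !mxE. Qed.

Lemma trunc_trunc k l r : trunc k (trunc l r) = trunc (minn k l) r.
Proof. by apply/rowP => i; rewrite !mxE leq_min; case: (i < k)%N. Qed.

Lemma truncS (i : 'I_K) s p : agree i s p ->
  trunc i.+1 s = trunc i p + s 0 i *: delta_mx 0 i.
Proof.
move=> sp; apply/rowP => j; rewrite !mxE eqxx /= ltnS.
have [ji|ij|/val_inj ->] := ltngtP j i; last by rewrite eqxx mulr1 add0r.
- by rewrite sp // -(inj_eq val_inj) (ltn_eqF ji) mulr0 addr0.
- by rewrite -(inj_eq val_inj) (gtn_eqF ij) mulr0 addr0.
Qed.

Lemma sum_delta_trunc k r :
  \sum_(j < K | (j < k)%N) r 0 j *: (delta_mx 0 j : 'rV[R]_K) = trunc k r.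
Proof.
apply/rowP => i; rewrite summxE !mxE.
under eq_bigr => j _ do rewrite !mxE eqxx /=.
have [ik|ki] := ltnP i k.
  rewrite (bigD1 i) //= eqxx mulr1 big1 ?addr0 // => j /andP[_ ji].
  by rewrite eq_sym (negbTE ji) mulr0.
rewrite big1 // => j jk; case: eqP => [ij|]; last by rewrite mulr0.
by move: jk; rewrite -ij ltnNge ki.
Qed.

Lemma loss_trunc k zeta r : loss k zeta (trunc k r) = 0%E.
Proof.
rewrite /loss big1 ?oppr0 // => j kj.
by rewrite mxE ltnNge kj mulr0.
Qed.

End Truncation.

Section WorstCaseRisk.
Context {R : realType} {K : nat} {W : set 'rV[R]_K}.
Implicit Types (X Y : 'rV[R]_K -> \bar R) (r s p q : 'rV[R]_K).

Lemma rho_ge {l Y q s} : W s -> agree l s q -> (Y s <= rho W l Y q)%E.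
Proof.
move=> Ws sq; rewrite /rho; case: pselect => /= [_|[]]; last by exists s.
by apply: ereal_sup_ubound; exists s.
Qed.

Lemma rho_le l Y q M : W q ->
  (forall s, W s -> agree l s q -> (Y s <= M)%E) -> (rho W l Y q <= M)%E.
Proof.
move=> Wq hY; rewrite /rho; case: pselect => /= [_|[]]; last by exists q.
by apply: ge_ereal_sup => _ [s [Ws sq] <-]; apply: hY.
Qed.

Lemma foldr_rho_ge X (ls : seq nat) s :
  W s -> (X s <= foldr (fun l Y => rho W l Y) X ls s)%E.
Proof.
move=> Ws; elim: ls => //= l ls IH.
exact: le_trans IH (rho_ge Ws (agree_refl l s)).
Qed.

Lemma foldr_rho_le X l (ls : seq nat) p M : all (leq l) ls ->
  (forall s, W s -> agree l s p -> (X s <= M)%E) ->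
  forall q, W q -> agree l q p -> (foldr (fun l Y => rho W l Y) X ls q <= M)%E.
Proof.
move=> lls hX; elim: ls lls => [_|i ls IH /= /andP[li lls]] q Wq qp /=.
  exact: hX.
apply: rho_le => // s Ws sq; apply: IH => // j jl.
by rewrite sq ?qp // (leq_trans jl).
Qed.

Lemma rho_fromS X l : (l < K)%N -> rho_from W l X = rho W l (rho_from W l.+1 X).
Proof. by move=> lK; rewrite /rho_from -subnSK. Qed.

Lemma rho_from_le X l p M : W p ->
  (forall s, W s -> agree l s p -> (X s <= M)%E) -> (rho_from W l X p <= M)%E.
Proof.
move=> Wp hX; apply: foldr_rho_le hX p Wp (agree_refl l p).
by apply/allP => j; rewrite mem_iota => /andP[].
Qed.

Lemma rho_from_ge_trunc X l r : (l < K)%N -> W (trunc l r) ->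
  (X (trunc l r) <= rho_from W l X r)%E.
Proof.
move=> lK Wt; rewrite rho_fromS //.
apply: le_trans _ (rho_ge Wt (agree_trunc l r)).
exact: foldr_rho_ge.
Qed.

Lemma trunc_closed_sub_A_set :
  (forall s l, W s -> (l < K)%N -> W (trunc l s)) -> W `<=` A_set W.
Proof.
move=> Wtrunc r Wr k kK /=; split.
  apply: (@lt_le_trans _ _ 0%E) => //.
  apply: le_ereal_inf_tmp => _ [zeta _ <-].
  by rewrite -(loss_trunc k zeta r); apply: rho_from_ge_trunc; last exact: Wtrunc.
apply: le_trans (ereal_inf_lbound _) _; first by exists (fun _ _ => 0).
apply: rho_from_le => // s _ _.
by rewrite /loss big1 ?oppr0 // => j _; rewrite mul0r.
Qed.

Definition single_bet (i : nat) (c : R) : nat -> 'rV[R]_K -> R :=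
  fun j _ => if j == i then c else 0.

Lemma loss_single_bet (i : 'I_K) c s : loss i (single_bet i c) s = (- (c * s 0 i))%:E.
Proof.
rewrite /loss /single_bet (bigD1 i) //= eqxx big1 ?addr0 // => j /andP[_ ji].
by rewrite (inj_eq val_inj) (negbTE ji) mul0r.
Qed.

Lemma A_set_bet_bounded (i : 'I_K) p : W `<=` A_set W -> W p ->
  exists M : R, forall c, exists2 s, W s /\ agree i s p & c * s 0 i <= M.
Proof.
move=> WA Wp; have [] := WA p Wp i (ltn_ord i).
set v := ereal_inf _ => vgt vle.
have [x vx] : exists x, v = x%:E by move: vgt vle; case: v => [x| |] //; exists x.
exists (1 - x) => c; apply: contrapT => noS.
have : (v <= rho_from W i (loss i (single_bet i c)) p)%E.
  by apply: ereal_inf_lbound; exists (single_bet i c).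
apply/negP; rewrite -ltNge vx; apply: le_lt_trans (_ : (x - 1)%:E < x%:E)%E; last first.
  by rewrite lte_fin; lra.
apply: rho_from_le => // s Ws sp; rewrite loss_single_bet lee_fin.
have : ~ c * s 0 i <= 1 - x by move=> cs; apply: noS; exists s.
by move/negP; rewrite -ltNge; lra.
Qed.

End WorstCaseRisk.

Lemma bounded_bets_small_values {R : realType} {T : Type} {S : set T} {f : T -> R} {M : R} :
  (forall c, exists2 s, S s & c * f s <= M) ->
  forall e, 0 < e -> (exists2 s, S s & f s < e) /\ (exists2 s, S s & - e < f s).
Proof.
move=> hM e e0; set D := (`|M| + 1) / e.
have D0 : 0 < D by rewrite divr_gt0 // ltr_wpDl.
have De : D * e = `|M| + 1 by rewrite divfK // gt_eqF.
have MM := ler_norm M.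
split.
  have [s Ss hs] := hM D; exists s => //.
  by rewrite -(ltr_pM2l D0) De; lra.
have [s Ss hs] := hM (- D); exists s => //.
by rewrite -(ltr_pM2l D0) mulrN De; lra.
Qed.

Section ConvexClosed.
Context {R : realType} {K : nat} {U : set 'rV[R]_K}.
Hypothesis convU : convexU U.
Implicit Types (x d : 'rV[R]_K).

Lemma convexU_line_between {x d a b} :
  U (x + a *: d) -> U (x + b *: d) -> a <= 0 -> 0 <= b -> U x.
Proof.
move=> Ua Ub a0 b0; have [ab|ab] := eqVneq a b.
  have a_eq0 : a = 0 by lra.
  by rewrite a_eq0 scale0r addr0 in Ua.
have ba_gt0 : 0 < b - a by rewrite subr_gt0 lt_neqAle ab /=; lra.
have ba_neq0 : b - a != 0 by rewrite gt_eqF.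
set t := b / (b - a).
have -> : x = t *: (x + a *: d) + (1 - t) *: (x + b *: d).
  rewrite !scalerDr !scalerA addrACA -!scalerDl.
  have -> : t + (1 - t) = 1 by ring.
  have -> : t * a + (1 - t) * b = 0 by rewrite /t; field.
  by rewrite scale1r scale0r addr0.
apply: convU => //; first by rewrite divr_ge0 // ltW.
by rewrite ler_pdivrMr //; lra.
Qed.

Hypothesis closedU : closed U.

Lemma convex_closed_line_mem x d :
  (forall e, 0 < e ->
     exists a b, [/\ U (x + a *: d), U (x + b *: d), a < e & - e < b]) -> U x.
Proof.
move=> hab; apply: closedU => B /nbhs_ballP [e /= e0 eB].
set eps := e / (`|d| + 1).
have d1 : 0 < `|d| + 1 by rewrite ltr_wpDl.
have eps0 : 0 < eps by rewrite divr_gt0.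
have epsd : eps * (`|d| + 1) = e by rewrite divfK // gt_eqF.
have [a [b [Ua Ub ae be]]] := hab eps eps0.
have [t [teps Ut]] : exists t, `|t| < eps /\ U (x + t *: d).
  have [ea|ae'] := ltrP (- eps) a; first by exists a; rewrite ltr_norml ea ae.
  have [be'|eb] := ltrP b eps; first by exists b; rewrite ltr_norml be be'.
  exists 0; rewrite normr0 scale0r addr0; split => //.
  by apply: (convexU_line_between Ua Ub); lra.
exists (x + t *: d); split => //; apply: eB.
rewrite -ball_normE /ball_ /= opprD addrA subrr add0r normrN normrZ.
have := normr_ge0 d; have := normr_ge0 t; nra.
Qed.

Lemma no_arbitrage_trunc_mem {W : set 'rV[R]_K} : W `<=` U -> W `<=` A_set W ->
  forall l, (l <= K)%N -> forall p, W p -> U (trunc l p).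
Proof.
move=> WU WA; apply: nat_down_ind => [p Wp|l lK IH p Wp].
  by rewrite truncK; apply: WU.
pose i := Ordinal lK.
have [M betM] := A_set_bet_bounded i p WA Wp.
apply: (@convex_closed_line_mem _ (delta_mx 0 i)) => e e0.
have [[a [Wa ap] ae] [b [Wb bp] be]] := bounded_bets_small_values betM e e0.
exists (a 0 i), (b 0 i); split => //.
- by rewrite -(truncS i a p ap); apply: IH.
- by rewrite -(truncS i b p bp); apply: IH.
Qed.

Lemma no_arbitrage_sub_V_set {W : set 'rV[R]_K} : W `<=` U -> W `<=` A_set W ->
  W `<=` V_set U.
Proof.
move=> WU WA r Wr; split.
  by rewrite -(trunc0 r); apply: (no_arbitrage_trunc_mem WU WA).
move=> k _ kK; left; rewrite sum_delta_trunc.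
by apply: (no_arbitrage_trunc_mem WU WA) => //; lia.
Qed.

End ConvexClosed.

Section VSet.
Context {R : realType} {K : nat} {U : set 'rV[R]_K}.

Lemma V_setI_trunc s l : (V_set U `&` U) s -> (l < K)%N -> U (trunc l s).
Proof.
move=> [[U0 hV] Us] lK; case: l lK => [|l] lK; first by rewrite trunc0.
case: (hV l.+1); [done | lia | by rewrite sum_delta_trunc | by case; exists s].
Qed.

Lemma V_setI_trunc_closed s l :
  (V_set U `&` U) s -> (l < K)%N -> (V_set U `&` U) (trunc l s).
Proof.
move=> Ws lK; have [[U0 _] _] := Ws; split; last exact: V_setI_trunc.
split=> // k _ _; left; rewrite sum_delta_trunc trunc_trunc.
by apply: V_setI_trunc Ws _; rewrite (leq_ltn_trans (geq_minr k l)).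
Qed.

End VSet.

Theorem theorem1 (R : realType) (K : nat) (U : set 'rV[R]_K) :
  convexU U -> closed U -> is_na_subset U (V_set U `&` U).
Proof.
move=> convU closedU; split.
- by move=> r [].
- exact/trunc_closed_sub_A_set/V_setI_trunc_closed.
- move=> W WU WA r Wr; split; last exact: WU.
  exact: (no_arbitrage_sub_V_set convU closedU WU WA).
Qed.
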